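(* Let $k \geq 1$. If there is a (deterministic, or randomized with error at most $1/3$) communication protocol $Q$ for $\operatorname{SSD}_{2k,k+1}$ under the natural partition (Alice holds $x \in \{0,1\}^{2k}$, Bob holds $y \in \{0,1\}^{k+1}$), then there is a communication protocol of the same kind for $\operatorname{IND}_k$ under the natural partition (Alice holds $x \in \{0,1\}^k$, Bob holds $i \in [k]$) whose cost is identical to that of $Q$.
   Context: $\operatorname{SSD}_{n,k} : \{0,1\}^n \times \{0,1\}^k \to \{0,1\}$ is $1$ iff $y$ is a subsequence of $x$ (there exist indices $i_1 < \dots < i_k$ with $x_{i_j} = y_j$). $\operatorname{IND}_k : \{0,1\}^k \times [k] \to \{0,1\}$ is the indexing function $\operatorname{IND}_k(x,i) = x_i$. The cost of a protocol is the maximum number of bits exchanged over all inputs. *)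

From mathcomp Require Import all_boot.
Set Implicit Arguments. Unset Strict Implicit. Unset Printing Implicit Defensive.

Definition bitvec (n : nat) := n.-tuple bool.

Definition SSD (n k : nat) (x : bitvec n) (y : bitvec k) : bool :=
  [exists f : {ffun 'I_k -> 'I_n},
     [forall i : 'I_k, forall j : 'I_k, (i < j) ==> (f i < f j)] &&
     [forall j : 'I_k, tnth x (f j) == tnth y j]].

Definition IND (k : nat) (x : bitvec k) (i : 'I_k) : bool := tnth x i.

(* Deterministic two-party protocol trees: Alice holds a : A, Bob holds b : B.
   At an Alice node, Alice sends the bit f a (0 -> left, 1 -> right);
   similarly for Bob. Leaves carry the output. *)
Inductive proto (A B : Type) : Type :=
| PLeaf of bool
| PAlice of (A -> bool) & proto A B & proto A B
| PBob of (B -> bool) & proto A B & proto A B.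
Arguments PLeaf {A B}.

Fixpoint peval (A B : Type) (p : proto A B) (a : A) (b : B) : bool :=
  match p with
  | PLeaf v => v
  | PAlice f l r => if f a then peval r a b else peval l a b
  | PBob g l r => if g b then peval r a b else peval l a b
  end.

Fixpoint pbits (A B : Type) (p : proto A B) (a : A) (b : B) : nat :=
  match p with
  | PLeaf _ => 0
  | PAlice f l r => (if f a then pbits r a b else pbits l a b).+1
  | PBob g l r => (if g b then pbits r a b else pbits l a b).+1
  end.

Definition pcost (A B : finType) (p : proto A B) : nat :=
  \max_(a : A) \max_(b : B) pbits p a b.

Definition det_computes (A B : finType) (p : proto A B) (F : A -> B -> bool) :=
  forall a b, peval p a b = F a b.

(* Public-coin randomized protocol: a family of deterministic protocols indexed
   by a uniformly random shared string r in {0,1}^m. *)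
Definition pub_proto (A B : Type) (m : nat) := m.-tuple bool -> proto A B.

Definition pub_computes (A B : finType) (m : nat) (P : pub_proto A B m)
  (F : A -> B -> bool) :=
  forall a b, 3 * #|[pred r : m.-tuple bool | peval (P r) a b != F a b]| <= 2 ^ m.

Definition pub_cost (A B : finType) (m : nat) (P : pub_proto A B m) : nat :=
  \max_(r : m.-tuple bool) pcost (P r).

(* Private-coin randomized protocol: Alice has a private uniformly random
   string in {0,1}^ma, Bob one in {0,1}^mb (independent). *)
Definition priv_proto (A B : Type) (ma mb : nat) :=
  proto (A * ma.-tuple bool) (B * mb.-tuple bool).

Definition priv_computes (A B : finType) (ma mb : nat) (P : priv_proto A B ma mb)
  (F : A -> B -> bool) :=
  forall a b, 3 * #|[pred r : ma.-tuple bool * mb.-tuple bool |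
                      peval P (a, r.1) (b, r.2) != F a b]| <= 2 ^ (ma + mb).

Definition priv_cost (A B : finType) (ma mb : nat) (P : priv_proto A B ma mb) : nat :=
  pcost P.

From mathcomp Require Import all_boot zify.
Set Implicit Arguments.
Unset Strict Implicit.
Unset Printing Implicit Defensive.

(* Alice sends x to its dual-rail encoding x_0 ~x_0 x_1 ~x_1 ... and Bob
   sends i to 1^(i+1) 0^(k-i). Every block {2m, 2m+1} of the encoding holds
   one 1 and one 0, so equal letters of an embedded subsequence sit in
   strictly increasing blocks: the i+1 ones end in a block >= i and the k-i
   zeros start in a block <= i. Hence the last 1 is at position 2i, i.e.
   x_i = 1; conversely x_i = 1 gives an embedding. Running a protocol for SSD
   on the encoded inputs therefore computes IND; since the encodings are not
   onto, its cost may drop, and Alice restores it exactly with dummy bits. *)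

Section Comap.
Variables (A B A' B' : Type) (fa : A -> A') (fb : B -> B').

Fixpoint pcomap (p : proto A' B') : proto A B :=
  match p with
  | PLeaf v => PLeaf v
  | PAlice f l r => PAlice (f \o fa) (pcomap l) (pcomap r)
  | PBob g l r => PBob (g \o fb) (pcomap l) (pcomap r)
  end.

Lemma peval_pcomap p a b : peval (pcomap p) a b = peval p (fa a) (fb b).
Proof. by elim: p => [v|f l IHl r IHr|g l IHl r IHr] //=; rewrite IHl IHr. Qed.

Lemma pbits_pcomap p a b : pbits (pcomap p) a b = pbits p (fa a) (fb b).
Proof. by elim: p => [v|f l IHl r IHr|g l IHl r IHr] //=; rewrite IHl IHr. Qed.

End Comap.

Section Padding.
Variables A B : Type.

Fixpoint ppad (n : nat) (p : proto A B) : proto A B :=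
  if n is n'.+1 then PAlice (fun _ => false) (ppad n' p) (ppad n' p) else p.

Lemma peval_ppad n p a b : peval (ppad n p) a b = peval p a b.
Proof. by elim: n => //= n ->. Qed.

Lemma pbits_ppad n p a b : pbits (ppad n p) a b = n + pbits p a b.
Proof. by elim: n => //= n ->. Qed.

End Padding.

Section Cost.
Variables A B : finType.

Lemma pcost_le (p : proto A B) c :
  (forall a b, pbits p a b <= c) -> pcost p <= c.
Proof. by move=> le_c; apply/bigmax_leqP => a _; apply/bigmax_leqP => b _. Qed.

Lemma pbits_le_pcost (p : proto A B) a b : pbits p a b <= pcost p.
Proof.
apply: leq_trans (leq_bigmax a).
exact: (leq_bigmax (F := fun b => pbits p a b)).
Qed.

Lemma pcost_attained (a0 : A) (b0 : B) (p : proto A B) :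
  exists a b, pbits p a b = pcost p.
Proof.
by rewrite /pcost (bigmax_eq_arg a0) // (bigmax_eq_arg b0) //; do 2!eexists.
Qed.

Lemma pcost_ppad (a0 : A) (b0 : B) n (p : proto A B) :
  pcost (ppad n p) = n + pcost p.
Proof.
apply/eqP; rewrite eqn_leq; apply/andP; split.
  by apply: pcost_le => a b; rewrite pbits_ppad leq_add2l pbits_le_pcost.
have [a [b <-]] := pcost_attained a0 b0 p.
by rewrite -pbits_ppad pbits_le_pcost.
Qed.

End Cost.

Section Reduction.
Variables (A B A' B' : finType) (fa : A -> A') (fb : B -> B') (a0 : A) (b0 : B).

Definition preduce (p : proto A' B') : proto A B :=
  ppad (pcost p - pcost (pcomap fa fb p)) (pcomap fa fb p).

Lemma peval_preduce p a b : peval (preduce p) a b = peval p (fa a) (fb b).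
Proof. by rewrite peval_ppad peval_pcomap. Qed.

Lemma pcost_preduce p : pcost (preduce p) = pcost p.
Proof.
rewrite (pcost_ppad a0 b0) subnK //.
by apply: pcost_le => a b; rewrite pbits_pcomap pbits_le_pcost.
Qed.

End Reduction.

Section ProblemReduction.
Variables (A B A' B' : finType) (fa : A -> A') (fb : B -> B') (a0 : A) (b0 : B).
Variables (F : A' -> B' -> bool) (G : A -> B -> bool).
Hypothesis reduce_G_to_F : forall a b, F (fa a) (fb b) = G a b.

Lemma det_computes_reduction (Q : proto A' B') :
  det_computes Q F ->
  exists P : proto A B, det_computes P G /\ pcost P = pcost Q.
Proof.
move=> QF; exists (preduce fa fb Q); split; last exact: pcost_preduce.
by move=> a b; rewrite peval_preduce QF.
Qed.

Lemma pub_computes_reduction m (Q : pub_proto A' B' m) :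
  pub_computes Q F ->
  exists m' (P : pub_proto A B m'), pub_computes P G /\ pub_cost P = pub_cost Q.
Proof.
move=> QF; exists m, (fun r => preduce fa fb (Q r)); split.
  move=> a b; rewrite -reduce_G_to_F; apply: leq_trans (QF (fa a) (fb b)).
  by apply/eq_leq/congr1/eq_card => r; rewrite !inE peval_preduce.
by apply: eq_bigr => r _; apply: pcost_preduce.
Qed.

Lemma priv_computes_reduction ma mb (Q : priv_proto A' B' ma mb) :
  priv_computes Q F ->
  exists ma' mb' (P : priv_proto A B ma' mb'),
    priv_computes P G /\ priv_cost P = priv_cost Q.
Proof.
move=> QF; exists ma, mb.
pose fa' (ar : A * ma.-tuple bool) := (fa ar.1, ar.2).
pose fb' (br : B * mb.-tuple bool) := (fb br.1, br.2).
exists (preduce fa' fb' Q); split.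
  move=> a b; rewrite -reduce_G_to_F; apply: leq_trans (QF (fa a) (fb b)).
  by apply/eq_leq/congr1/eq_card => r; rewrite !inE peval_preduce.
exact: (@pcost_preduce _ _ _ _ fa' fb'
         (a0, nseq_tuple ma false) (b0, nseq_tuple mb false)).
Qed.

End ProblemReduction.

Lemma SSDP n m (x : bitvec n) (y : bitvec m) :
  reflect (exists2 g : nat -> nat,
             forall t, t.+1 < m -> g t < g t.+1 &
             forall t, t < m -> g t < n /\ nth false x (g t) = nth false y t)
          (SSD x y).
Proof.
apply: (iffP existsP) => [[f /andP[/forallP f_incr /forallP f_match]] |
                          [g g_incr g_match]].
  case: m y f f_incr f_match => [|m] y f f_incr f_match.
    by exists id => *; lia.
  exists (fun t => val (f (inord t))) => [t tm | t tm].
    have /forallP/(_ (inord t.+1))/implyP := f_incr (inord t).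
    by rewrite !inordK //; [apply | lia].
  have /eqP := f_match (inord t).
  by rewrite !(tnth_nth false) inordK // => ->; split; first exact: ltn_ord.
have g_homo : {in gtn m &, {homo g : s t / s < t}}.
  apply: homo_ltn_in => [s t u | s t _ tm u /andP[_ ut] | t _].
  - exact: ltn_trans.
  - by rewrite inE (ltn_trans ut).
  - exact: g_incr.
have g_lt (t : 'I_m) : g t < n by case: (g_match t (ltn_ord t)).
exists [ffun t => Ordinal (g_lt t)]; apply/andP; split; apply/forallP => s.
  by apply/forallP => t; apply/implyP => st; rewrite !ffunE /= g_homo ?inE.
by rewrite ffunE !(tnth_nth false); case: (g_match s (ltn_ord s)) => _ ->.
Qed.

Definition dual_rail k (x : bitvec k) : bitvec (2 * k) :=
  [tuple odd j (+) nth false x j./2 | j < 2 * k].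

Definition unary k (i : 'I_k) : bitvec k.+1 := [tuple j <= i | j < k.+1].

Lemma nth_dual_rail k (x : bitvec k) p :
  p < 2 * k -> nth false (dual_rail x) p = odd p (+) nth false x p./2.
Proof. by move=> pk; rewrite (nth_mktuple _ _ (Ordinal pk)). Qed.

Lemma nth_dual_rail_block k (x : bitvec k) (c : bool) m :
  m < k -> nth false (dual_rail x) (c + m.*2) = c (+) nth false x m.
Proof.
move=> mk; rewrite nth_dual_rail; last by case: c; lia.
by rewrite oddD odd_double addbF oddb half_bit_double.
Qed.

Lemma nth_unary k (i : 'I_k) t : t < k.+1 -> nth false (unary i) t = (t <= i).
Proof. by move=> tk; rewrite (nth_mktuple _ _ (Ordinal tk)). Qed.

Lemma half_lt_of_eq_odd_addb (b : nat -> bool) p q :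
  p < q -> odd p (+) b p./2 = odd q (+) b q./2 -> p./2 < q./2.
Proof.
case: (ltngtP p./2 q./2) => // [|eq_half] pq; first lia.
by rewrite eq_half => /addIb; lia.
Qed.

Section Spread.
Variables (w : nat -> bool) (g : nat -> nat) (c : bool).
Hypothesis w_half : forall p q, p < q -> w p = w q -> p./2 < q./2.

Lemma half_spread s n :
  (forall t, s <= t < s + n -> g t < g t.+1) ->
  (forall t, s <= t <= s + n -> w (g t) = c) ->
  (g s)./2 + n <= (g (s + n))./2.
Proof.
elim: n => [|n IHn] g_incr g_c; first by rewrite !addn0.
have IH : (g s)./2 + n <= (g (s + n))./2.
  by apply: IHn => t st; [apply: g_incr | apply: g_c]; lia.
have step : (g (s + n))./2 < (g (s + n).+1)./2.
  by apply: w_half; [apply: g_incr | rewrite !g_c]; lia.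
by rewrite !addnS; lia.
Qed.

End Spread.

Lemma SSD_dual_rail_unary k (x : bitvec k) (i : 'I_k) :
  SSD (dual_rail x) (unary i) = IND x i.
Proof.
rewrite /IND (tnth_nth false); set b := nth false x.
have ik := ltn_ord i.
apply/SSDP/idP => [[g g_incr g_match] | xi].
  have g_val t : t <= k -> odd (g t) (+) b (g t)./2 = (t <= i).
    move=> tk; case: (g_match t tk) => gtk.
    by rewrite nth_dual_rail // nth_unary.
  have spread := half_spread (half_lt_of_eq_odd_addb (b := b)).
  have ones : (g 0)./2 + i <= (g i)./2.
    by apply: (spread g true 0 i) => t ?; rewrite ?g_val ?g_incr; lia.
  have zeros : (g i.+1)./2 + (k - i.+1) <= (g k)./2.
    have := spread g false i.+1 (k - i.+1); rewrite subnKC //.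
    by apply=> t ?; rewrite ?g_val ?g_incr; lia.
  have gk : g k < 2 * k by case: (g_match k (leqnn k)).
  have gi_lt := g_incr i ik.
  have gi : g i = i.*2 by lia.
  by have := g_val i (ltnW ik); rewrite gi odd_double doubleK leqnn.
(* The ones use the 1 of blocks 0..i (position 2i since x_i = 1), the zeros
   the 0 of blocks i..k-1. *)
pose h t := if t <= i then ~~ b t + t.*2 else b t.-1 + t.-1.*2.
exists h => [t tk | t tk].
  rewrite /h; case: (ltngtP t i) => [ti | it | ->].
  - by have := leq_b1 (~~ b t); lia.
  - by have := leq_b1 (b t.-1); lia.
  by rewrite /= xi.
rewrite /h nth_unary //; case: ifP => ti.
  split; first by have := leq_b1 (~~ b t); lia.
  by rewrite nth_dual_rail_block ?addNb ?addbb //; lia.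
split; first by have := leq_b1 (b t.-1); lia.
by rewrite nth_dual_rail_block ?addbb //; lia.
Qed.

Theorem mainTheorem6 (k : nat) (hk : 1 <= k) :
  (* deterministic *)
  (forall Q : proto (bitvec (2 * k)) (bitvec k.+1),
     det_computes Q (@SSD (2 * k) k.+1) ->
     exists P : proto (bitvec k) 'I_k,
       det_computes P (@IND k) /\ pcost P = pcost Q) /\
  (* public-coin randomized, error at most 1/3 *)
  (forall (m : nat) (Q : pub_proto (bitvec (2 * k)) (bitvec k.+1) m),
     pub_computes Q (@SSD (2 * k) k.+1) ->
     exists (m' : nat) (P : pub_proto (bitvec k) 'I_k m'),
       pub_computes P (@IND k) /\ pub_cost P = pub_cost Q) /\
  (* private-coin randomized, error at most 1/3 *)
  (forall (ma mb : nat) (Q : priv_proto (bitvec (2 * k)) (bitvec k.+1) ma mb),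
     priv_computes Q (@SSD (2 * k) k.+1) ->
     exists (ma' mb' : nat) (P : priv_proto (bitvec k) 'I_k ma' mb'),
       priv_computes P (@IND k) /\ priv_cost P = priv_cost Q).
Proof.
pose a0 : bitvec k := nseq_tuple k false; pose b0 : 'I_k := Ordinal hk.
have IND_to_SSD := @SSD_dual_rail_unary k.
split; [|split].
- exact: (det_computes_reduction a0 b0 (F := @SSD _ _) IND_to_SSD).
- exact: (pub_computes_reduction a0 b0 (F := @SSD _ _) IND_to_SSD).
- exact: (priv_computes_reduction a0 b0 (F := @SSD _ _) IND_to_SSD).
Qed.
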